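(* Let $q\in\mathbb{C}$ with $0<|q|\le 1$ and $A\in M_n$. (a) If $A\in\Pi^n_{s,\alpha}$ for some $\alpha\in[0,\pi/2)$, then $|q|\cos(\alpha)\,\|A\|\le w_q(A)\le \|A\|$. (b) If either $A,A^2\in\Pi^n_{s,\alpha}$ for some $\alpha\in[0,\pi/2)$, or $A$ is accretive-dissipative, then $\frac{|q|}{\sqrt2}\|A\|\le w_q(A)\le\|A\|$.
   Context: $M_n$ is the algebra of complex $n\times n$ matrices with the operator (spectral) norm $\|\cdot\|$. For $|q|\le1$, $W_q(A)=\{\langle Ax,y\rangle: x,y\in\mathbb{C}^n,\ \|x\|=\|y\|=1,\ \langle x,y\rangle=q\}$ and $w_q(A)=\sup\{|z|:z\in W_q(A)\}$. The numerical range is $W(A)=\{\langle Ax,x\rangle:\|x\|=1\}$. For $\alpha\in[0,\pi/2)$, $S_\alpha=\{z\in\mathbb{C}:\operatorname{Re}z>0,\ |\operatorname{Im}z|\le\tan(\alpha)\operatorname{Re}z\}$ and $\Pi^n_{s,\alpha}=\{A\in M_n: W(A)\subseteq S_\alpha\}$ (sectorial matrices). With $\mathcal{R}(A)=\frac{A+A^*}{2}$, $\mathcal{I}(A)=\frac{A-A^*}{2i}$, $A$ is accretive-dissipative if $\mathcal{R}(A)>0$ and $\mathcal{I}(A)>0$ (positive definite). *)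

From HB Require Import structures.
From mathcomp Require Import all_boot all_order all_algebra.
From mathcomp Require Import complex.
From mathcomp Require Import boolp classical_sets reals trigo.
Set Implicit Arguments. Unset Strict Implicit. Unset Printing Implicit Defensive.
Import Order.TTheory GRing.Theory Num.Theory.
Local Open Scope ring_scope.
Local Open Scope complex_scope.

Section Defs.
Variable R : realType.
Local Notation C := R[i].

Definition cabs (z : C) : R := Num.sqrt (complex.Re z ^+ 2 + complex.Im z ^+ 2).

Definition cdot n (x y : 'cV[C]_n) : C := \sum_(i < n) x i 0 * (y i 0)^*.

Definition vnorm n (x : 'cV[C]_n) : R := Num.sqrt (complex.Re (cdot x x)).

Definition adjmx n (A : 'M[C]_n) : 'M[C]_n := \matrix_(i, j) (A j i)^*.

Definition opnorm n (A : 'M[C]_n) : R :=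
  reals.sup [set vnorm (A *m x) | x in [set x : 'cV[C]_n | vnorm x = 1]]%classic.

Definition qnumrange n (q : C) (A : 'M[C]_n) : C -> Prop :=
  fun z => exists x y : 'cV[C]_n,
    [/\ vnorm x = 1, vnorm y = 1, cdot x y = q & z = cdot (A *m x) y].

Definition qnumradius n (q : C) (A : 'M[C]_n) : R :=
  reals.sup [set cabs z | z in qnumrange q A]%classic.

Definition numrange n (A : 'M[C]_n) : C -> Prop :=
  fun z => exists x : 'cV[C]_n, vnorm x = 1 /\ z = cdot (A *m x) x.

Definition sector (alpha : R) : C -> Prop :=
  fun z => 0 < complex.Re z /\ `|complex.Im z| <= tan alpha * complex.Re z.

Definition sectorial n (alpha : R) (A : 'M[C]_n) : Prop :=
  forall z, numrange A z -> sector alpha z.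

Definition realpart n (A : 'M[C]_n) : 'M[C]_n := (2%:R)^-1 *: (A + adjmx A).
Definition imagpart n (A : 'M[C]_n) : 'M[C]_n := ((2%:R) * 'i)^-1 *: (A - adjmx A).

(* positive definite: Hermitian and <Hx,x> > 0 (in the order of C, i.e. real
   and positive) for every nonzero x *)
Definition posdef n (H : 'M[C]_n) : Prop :=
  adjmx H = H /\ forall x : 'cV[C]_n, x != 0 -> 0 < cdot (H *m x) x.

Definition accretive_dissipative n (A : 'M[C]_n) : Prop :=
  posdef (realpart A) /\ posdef (imagpart A).

End Defs.

(* The upper bound w_q(A) <= ||A|| is Cauchy-Schwarz.  For a unit vector u and
   s = sqrt (1 - |q|^2), the unit vectors y = q^* u +- s z with z a unit vector
   orthogonal to u (which exists when n >= 2, and is not needed when |q| = 1)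
   satisfy <u, y> = q, and averaging the two values <A u, y> gives
   |q| |<A u, u>| <= w_q(A).
   Suppose W(om A) lies in the closed sector c |Im z| <= s Re z, with |om| = 1,
   c = cos t and s = sin t.  Writing om A = H + i K with H, K Hermitian, the forms
   s H - c K and s H + c K are positive semidefinite, and Cauchy-Schwarz for both
   gives c^2 |<A x, y>|^2 <= Re <om A x, x> Re <om A y, y>; combined with the
   previous bound this yields |q| c ||A|| <= w_q(A).  Part (a) is the case om = 1,
   t = alpha, and accretive-dissipative matrices are the case om = exp (-i pi/4),
   t = pi/4.  If A and A^2 are sectorial, Re <A^2 v, v> >= 0 reads
   ||K v|| <= ||H v||, and with H > 0 this forces |<K x, x>| <= <H x, x>, i.e.
   W(A) lies in the sector of half-angle pi/4: along the iterates
   w_k = (H^-1 K)^k x the values <H w_k, w_k> form a bounded log-convex sequence,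
   hence a nonincreasing one. *)

From HB Require Import structures.
From mathcomp Require Import all_boot all_order all_algebra.
From mathcomp Require Import complex.
From mathcomp Require Import boolp classical_sets reals trigo.
From mathcomp Require Import ring lra.
Import Order.TTheory GRing.Theory Num.Theory.
Local Open Scope ring_scope.
Local Open Scope complex_scope.

Set Implicit Arguments. Unset Strict Implicit. Unset Printing Implicit Defensive.

Local Notation Re := complex.Re.
Local Notation Im := complex.Im.

Section Modulus.
Variable R : realType.
Implicit Types (z w : R[i]) (k : R).

Lemma cabs_normc z : cabs z = ComplexField.Normc.normc z.
Proof. by case: z. Qed.

Lemma cabsE z : (cabs z)%:C = `|z|.
Proof. by rewrite normc_def. Qed.

Lemma cabs_ge0 z : 0 <= cabs z.
Proof. exact: sqrtr_ge0. Qed.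

Lemma cabsM z w : cabs (z * w) = cabs z * cabs w.
Proof. by rewrite !cabs_normc ComplexField.Normc.normcM. Qed.

Lemma ler_cabsD z w : cabs (z + w) <= cabs z + cabs w.
Proof. by rewrite !cabs_normc le_normcD. Qed.

Lemma cabs0 : cabs 0 = 0 :> R.
Proof. by rewrite /cabs /= expr0n addr0 sqrtr0. Qed.

Lemma ler_cabs_sum (I : Type) (r : seq I) (F : I -> R[i]) :
  cabs (\sum_(i <- r) F i) <= \sum_(i <- r) cabs (F i).
Proof.
elim/big_rec2: _ => [|i y z _ IH]; first by rewrite cabs0.
by apply: le_trans (ler_cabsD _ _) _; rewrite lerD2l.
Qed.

Lemma cabs_conjc z : cabs z^*%C = cabs z.
Proof. by case: z => a b; rewrite /cabs /= sqrrN. Qed.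

Lemma cabs_real k : cabs k%:C = `|k|.
Proof. by rewrite /cabs /= expr0n /= addr0 sqrtr_sqr. Qed.

Lemma cabs_eq0 z : cabs z = 0 -> z = 0.
Proof. by rewrite cabs_normc => /ComplexField.Normc.eq0_normc. Qed.

Lemma sqr_cabsC z : (cabs z ^+ 2)%:C = z * z^*%C.
Proof. by rewrite -sqr_normc -cabsE; exact: rmorphXn. Qed.

Lemma conjcMr k z : (k%:C * z)^*%C = k%:C * z^*%C.
Proof. by rewrite rmorphM; congr (_ * _); exact: conjc_real. Qed.

Lemma ReD z w : Re (z + w) = Re z + Re w.
Proof. by case: z; case: w. Qed.

Lemma ReB z w : Re (z - w) = Re z - Re w.
Proof. by case: z; case: w. Qed.

Lemma Re_realM k z : Re (k%:C * z) = k * Re z.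
Proof. by case: z => a b /=; rewrite mul0r subr0. Qed.

Lemma Im_realM k z : Im (k%:C * z) = k * Im z.
Proof. by case: z => a b /=; rewrite mul0r addr0. Qed.

Lemma Re_le_cabs z : Re z <= cabs z.
Proof.
apply: le_trans (ler_norm _) _; rewrite -lecR cabsE.
by apply: le_trans (normc_ge_Re z); rewrite lecR.
Qed.

End Modulus.

Notation quadform M u := (cdot (M *m u) u).

Section InnerProduct.
Variables (R : realType) (n : nat).
Implicit Types (x y z : 'cV[R[i]]_n) (M N : 'M[R[i]]_n) (a : R[i]).

Lemma cdotDl x y z : cdot (x + y) z = cdot x z + cdot y z.
Proof. by rewrite /cdot -big_split; apply: eq_bigr => i _; rewrite mxE mulrDl. Qed.

Lemma cdotZl a x z : cdot (a *: x) z = a * cdot x z.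
Proof. by rewrite /cdot mulr_sumr; apply: eq_bigr => i _; rewrite mxE mulrA. Qed.

Lemma cdotBl x y z : cdot (x - y) z = cdot x z - cdot y z.
Proof. by rewrite cdotDl -scaleN1r cdotZl mulN1r. Qed.

Lemma cdotC x y : cdot y x = (cdot x y)^*.
Proof.
by rewrite /cdot rmorph_sum; apply: eq_bigr => i _; rewrite rmorphM /= conjcK mulrC.
Qed.

Lemma cdotDr x y z : cdot x (y + z) = cdot x y + cdot x z.
Proof. by rewrite cdotC cdotDl rmorphD /= -!cdotC. Qed.

Lemma cdotZr a x z : cdot x (a *: z) = a^*%C * cdot x z.
Proof. by rewrite cdotC cdotZl rmorphM /= -cdotC. Qed.

Lemma cdotBr x y z : cdot x (y - z) = cdot x y - cdot x z.
Proof. by rewrite cdotC cdotBl rmorphB /= -!cdotC. Qed.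

Lemma cdot0l z : cdot 0 z = 0.
Proof. by rewrite -(scale0r 0) cdotZl mul0r. Qed.

Lemma cdot0r z : cdot z 0 = 0.
Proof. by rewrite cdotC cdot0l conjc0. Qed.

Lemma adjmxK M : adjmx (adjmx M) = M.
Proof. by apply/matrixP => i j; rewrite !mxE conjcK. Qed.

Lemma adjmxD M N : adjmx (M + N) = adjmx M + adjmx N.
Proof. by apply/matrixP => i j; rewrite !mxE rmorphD. Qed.

Lemma adjmxB M N : adjmx (M - N) = adjmx M - adjmx N.
Proof. by apply/matrixP => i j; rewrite !mxE rmorphB. Qed.

Lemma adjmxZ a M : adjmx (a *: M) = a^*%C *: adjmx M.
Proof. by apply/matrixP => i j; rewrite !mxE rmorphM. Qed.

Lemma adjmx1 : adjmx (1%:M : 'M[R[i]]_n) = 1%:M.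
Proof.
by apply/matrixP => i j; rewrite !mxE (eq_sym j); case: eqP; rewrite ?conjc1 ?conjc0.
Qed.

Lemma cdot_adjmx M x y : cdot (M *m x) y = cdot x (adjmx M *m y).
Proof.
rewrite /cdot; under eq_bigr => i _ do rewrite mxE big_distrl.
rewrite exchange_big; apply: eq_bigr => j _ /=.
rewrite mxE rmorph_sum mulr_sumr /=; apply: eq_bigr => i _.
by rewrite !mxE rmorphM /= conjCK mulrCA mulrA.
Qed.

Lemma herm_cdotC M x y : adjmx M = M -> cdot (M *m y) x = (cdot (M *m x) y)^*.
Proof. by move=> hM; rewrite cdot_adjmx hM -cdotC. Qed.

Lemma herm_quadform_real M x : adjmx M = M -> quadform M x = (Re (quadform M x))%:C.
Proof. by move=> hM; apply/esym/RRe_real/CrealP; exact/esym/herm_cdotC. Qed.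

Lemma cdot_self_ge0 x : 0 <= cdot x x.
Proof. by rewrite sumr_ge0 // => i _; rewrite -sqr_normc exprn_ge0. Qed.

Lemma cdot_self_real x : cdot x x = (Re (cdot x x))%:C.
Proof. by rewrite RRe_real // ger0_real // cdot_self_ge0. Qed.

Lemma Re_cdot_self_ge0 x : 0 <= Re (cdot x x).
Proof. by rewrite -lecR -cdot_self_real cdot_self_ge0. Qed.

Lemma cdot_self_eq0 x : cdot x x = 0 -> x = 0.
Proof.
move=> /eqP; rewrite psumr_eq0 => [/allP x0|i _]; last by rewrite -sqr_normc exprn_ge0.
apply/matrixP => i j; rewrite (ord1 j) mxE.
by have /x0 := mem_index_enum i; rewrite /= -sqr_normc sqrf_eq0 normr_eq0 => /eqP.
Qed.

Lemma vnorm_ge0 x : 0 <= vnorm x.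
Proof. exact: sqrtr_ge0. Qed.

Lemma vnorm0 : vnorm (0 : 'cV[R[i]]_n) = 0.
Proof. by rewrite /vnorm cdot0l sqrtr0. Qed.

Lemma sqr_vnorm x : vnorm x ^+ 2 = Re (cdot x x).
Proof. by rewrite sqr_sqrtr // Re_cdot_self_ge0. Qed.

Lemma sqr_vnormC x : (vnorm x ^+ 2)%:C = cdot x x.
Proof. by rewrite sqr_vnorm -cdot_self_real. Qed.

Lemma vnorm_gt0 x : x != 0 -> 0 < vnorm x.
Proof.
move=> x0; rewrite lt_def vnorm_ge0 andbT; apply: contra x0 => /eqP v0.
by apply/eqP/cdot_self_eq0; rewrite -sqr_vnormC v0 expr0n.
Qed.

Lemma vnorm_eq1 x : vnorm x = 1 <-> cdot x x = 1.
Proof.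
split=> [x1|x1]; first by rewrite -sqr_vnormC x1 expr1n.
by rewrite /vnorm x1 sqrtr1.
Qed.

Lemma vnorm_le x y : Re (cdot x x) <= Re (cdot y y) -> vnorm x <= vnorm y.
Proof. by move=> le_xy; rewrite ler_sqrt // Re_cdot_self_ge0. Qed.

Lemma cdot_normalize x : x != 0 ->
  cdot ((vnorm x)^-1%:C *: x) ((vnorm x)^-1%:C *: x) = 1 /\
  cdot x ((vnorm x)^-1%:C *: x) = (vnorm x)%:C.
Proof.
move=> x0; have v0 : vnorm x != 0 by rewrite gt_eqF ?vnorm_gt0.
rewrite cdotZl !cdotZr conjc_real -sqr_vnormC -!rmorphM.
by split; congr _%:C; field.
Qed.

End InnerProduct.

Lemma quadratic_ge0_le (R : realFieldType) (a d N : R) : 0 <= d ->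
  (forall t, 0 <= a - 2 * t * N + t ^+ 2 * N * d) -> N <= a * d.
Proof.
move=> d0 quad_ge0; have [d_gt0|] := ltrP 0 d.
  have := quad_ge0 d^-1; rewrite -(pmulr_lge0 _ d_gt0).
  have -> : (a - 2 * d^-1 * N + d^-1 ^+ 2 * N * d) * d = a * d - N.
    by field; rewrite gt_eqF.
  by rewrite subr_ge0.
move=> d_le0; have d_eq0 : d = 0 by apply/le_anti; rewrite d_le0 d0.
move: quad_ge0; rewrite d_eq0 => quad_ge0.
rewrite mulr0 leNgt; apply/negP => N_gt0.
have := quad_ge0 ((a + 1) / (2 * N)); rewrite mulr0 addr0.
have -> : a - 2 * ((a + 1) / (2 * N)) * N = -1 by field; rewrite gt_eqF.
by rewrite oppr_ge0 ler10.
Qed.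

Section CauchySchwarz.
Variables (R : realType) (n : nat).
Implicit Types (x y u : 'cV[R[i]]_n) (H : 'M[R[i]]_n).

Lemma psd_cauchy_schwarz H x y : adjmx H = H ->
  (forall u, 0 <= Re (quadform H u)) ->
  cabs (cdot (H *m x) y) ^+ 2 <= Re (quadform H x) * Re (quadform H y).
Proof.
move=> hH psdH; set b := cdot (H *m x) y.
set a := Re (quadform H x); set d := Re (quadform H y).
apply: quadratic_ge0_le => [|t]; first exact: psdH.
have := psdH (x - (t%:C * b) *: y).
suff -> : quadform H (x - (t%:C * b) *: y) =
    (a - 2 * t * cabs b ^+ 2 + t ^+ 2 * cabs b ^+ 2 * d)%:C by [].
have -> : (a - 2 * t * cabs b ^+ 2 + t ^+ 2 * cabs b ^+ 2 * d)%:C =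
    a%:C - 2 * t%:C * (cabs b ^+ 2)%:C + t%:C ^+ 2 * (cabs b ^+ 2)%:C * d%:C.
  by rewrite !(rmorphD, rmorphN, rmorphM, rmorphXn, rmorph_nat).
rewrite mulmxBr -scalemxAr cdotBl !cdotBr !cdotZl !cdotZr (herm_cdotC x y hH) -/b.
rewrite (herm_quadform_real x hH) (herm_quadform_real y hH) -/a -/d.
by rewrite conjcMr sqr_cabsC; ring.
Qed.

Lemma cauchy_schwarz x y : cabs (cdot x y) <= vnorm x * vnorm y.
Proof.
have psd1 u : 0 <= Re (quadform 1%:M u) by rewrite mul1mx Re_cdot_self_ge0.
have := psd_cauchy_schwarz x y (adjmx1 R n) psd1; rewrite !mul1mx -!sqr_vnorm.
by rewrite -exprMn ler_pXn2r ?nnegrE ?cabs_ge0 ?mulr_ge0 ?vnorm_ge0.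
Qed.

End CauchySchwarz.

Section Cartesian.
Variables (R : realType) (n : nat).
Implicit Types (x y u : 'cV[R[i]]_n) (H K M : 'M[R[i]]_n).

Lemma invC_2i : (2 * 'i%C)^-1 = - 'i%C / 2 :> R[i].
Proof.
apply: (@mulfI _ (2 * 'i%C)); first by rewrite mulf_neq0 ?pnatr_eq0 ?neq0Ci.
rewrite mulfV ?mulf_neq0 ?pnatr_eq0 ?neq0Ci //.
transitivity (- ('i%C ^+ 2) * (2 / 2) : R[i]); last by ring.
by rewrite sqr_i opprK mul1r divff ?pnatr_eq0.
Qed.

Lemma realpart_herm M : adjmx (realpart M) = realpart M.
Proof. by rewrite /realpart adjmxZ adjmxD adjmxK conjc_inv conjc_nat addrC. Qed.

Lemma imagpart_herm M : adjmx (imagpart M) = imagpart M.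
Proof.
rewrite /imagpart adjmxZ adjmxB adjmxK -opprB scalerN -scaleNr; congr (_ *: _).
by rewrite conjc_inv -invrN; congr _^-1; apply/eqP; simpc.
Qed.

Lemma quadform_realpart M u : quadform (realpart M) u = (Re (quadform M u))%:C.
Proof.
rewrite -scalemxAl mulmxDl cdotZl cdotDl (cdot_adjmx (adjmx M)) adjmxK.
by rewrite [cdot u _]cdotC ReJ_add mulrC.
Qed.

Lemma quadform_imagpart M u : quadform (imagpart M) u = (Im (quadform M u))%:C.
Proof.
rewrite -scalemxAl mulmxBl cdotZl cdotBl (cdot_adjmx (adjmx M)) adjmxK.
by rewrite [cdot u _]cdotC ImJ_sub invC_2i; ring.
Qed.

Lemma cartesianE M : M = realpart M + 'i%C *: imagpart M.
Proof.
apply/matrixP => i j; rewrite !mxE invC_2i.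
transitivity (2^-1 * (M i j + (M j i)^*%C) - ('i%C * 'i%C) * (M i j - (M j i)^*%C) / 2).
  by rewrite -expr2 sqr_i; field.
by ring.
Qed.

Lemma adjmx_cartesianE M : adjmx M = realpart M - 'i%C *: imagpart M.
Proof.
rewrite {1}[M]cartesianE adjmxD adjmxZ realpart_herm imagpart_herm.
by congr (_ + _); rewrite -scaleNr; congr (_ *: _); simpc.
Qed.

Lemma herm_realcomb (a b : R) H K : adjmx H = H -> adjmx K = K ->
  adjmx (a%:C *: H + b%:C *: K) = a%:C *: H + b%:C *: K.
Proof. by move=> hH hK; rewrite adjmxD !adjmxZ !conjc_real hH hK. Qed.

Lemma cdot_realcomb (a b : R) H K x y :
  cdot ((a%:C *: H + b%:C *: K) *m x) y =
  a%:C * cdot (H *m x) y + b%:C * cdot (K *m x) y.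
Proof. by rewrite mulmxDl -!scalemxAl cdotDl !cdotZl. Qed.

Lemma Re_quadform_realcomb (a b : R) H K u :
  Re (quadform (a%:C *: H + b%:C *: K) u) =
  a * Re (quadform H u) + b * Re (quadform K u).
Proof. by rewrite cdot_realcomb ReD !Re_realM. Qed.

End Cartesian.

(* With c = cos t and s = sin t, the closed sector |arg z| <= t. *)
Definition closed_sector (R : realType) (c s : R) (z : R[i]) : Prop :=
  0 <= Re z /\ c * `|Im z| <= s * Re z.

Lemma sqr_addr_le_mul (R : realFieldType) (u v p q p' q' : R) :
  0 <= u -> 0 <= v -> 0 <= p -> 0 <= q -> 0 <= p' -> 0 <= q' ->
  u ^+ 2 <= p * q -> v ^+ 2 <= p' * q' -> (u + v) ^+ 2 <= (p + p') * (q + q').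
Proof.
move=> u0 v0 p0 q0 p'0 q'0 hu hv.
have uv2 : (u * v) ^+ 2 <= (p * q) * (p' * q') by rewrite exprMn ler_pM ?sqr_ge0.
have amgm : 4 * ((p * q) * (p' * q')) <= (p * q' + p' * q) ^+ 2.
  by have := sqr_ge0 (p * q' - p' * q); nra.
have : 2 * (u * v) <= p * q' + p' * q.
  rewrite -(@ler_pXn2r _ 2) ?nnegrE ?mulr_ge0 ?addr_ge0 //; nra.
nra.
Qed.

Lemma scaled_sum_cauchy_schwarz (R : realFieldType) (k X u v p q p' q' a b : R) :
  0 < k -> 0 <= X -> 0 <= u -> 0 <= v -> 0 <= p -> 0 <= q -> 0 <= p' -> 0 <= q' ->
  u ^+ 2 <= p * q -> v ^+ 2 <= p' * q' -> k * X <= u + v ->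
  p + p' = k * a -> q + q' = k * b -> X ^+ 2 <= a * b.
Proof.
move=> k0 X0 u0 v0 p0 q0 p'0 q'0 hu hv hX hp hq.
have sum_le : (u + v) ^+ 2 <= k ^+ 2 * (a * b).
  have := sqr_addr_le_mul u0 v0 p0 q0 p'0 q'0 hu hv; rewrite hp hq.
  by have -> : k * a * (k * b) = k ^+ 2 * (a * b) by ring.
rewrite -(ler_pM2l (exprn_gt0 2 k0)) -exprMn; apply: le_trans sum_le.
by rewrite ler_pXn2r ?nnegrE ?addr_ge0 // mulr_ge0 // ltW.
Qed.

Section SectorCauchySchwarz.
Variables (R : realType) (n : nat).
Implicit Types (x y u : 'cV[R[i]]_n) (H M : 'M[R[i]]_n).

Lemma herm_quadform0_cdot H x y : adjmx H = H ->
  (forall u, Re (quadform H u) = 0) -> cdot (H *m x) y = 0.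
Proof.
move=> hH form0; have psdH u : 0 <= Re (quadform H u) by rewrite form0.
have := psd_cauchy_schwarz x y hH psdH; rewrite !form0 mulr0.
by move=> le0; apply/cabs_eq0/eqP; rewrite -sqrf_eq0 eq_le le0 sqr_ge0.
Qed.

Lemma cabs_cos_sin (c s : R) : s ^+ 2 + c ^+ 2 = 1 ->
  cabs (c%:C - 'i%C * s%:C) = 1 /\ cabs (c%:C + 'i%C * s%:C) = 1.
Proof.
move=> sc; have -> : c%:C + 'i%C * s%:C = Complex c s by apply/eqP; simpc.
have -> : c%:C - 'i%C * s%:C = Complex c (- s) by apply/eqP; simpc.
by rewrite /cabs /= sqrrN addrC sc sqrtr1.
Qed.

Lemma cabs_sector_decomp (r j : R[i]) (c s : R) : 0 <= s -> 0 <= c ->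
  s ^+ 2 + c ^+ 2 = 1 ->
  2 * s * c * cabs (r + 'i%C * j) <=
  cabs (s%:C * r + (- c)%:C * j) + cabs (s%:C * r + c%:C * j).
Proof.
move=> s_ge0 c_ge0 sc; have [cs_m cs_p] := cabs_cos_sin sc.
have decomp : (2 * s * c)%:C * (r + 'i%C * j) =
    (c%:C - 'i%C * s%:C) * (s%:C * r + (- c)%:C * j) +
    (c%:C + 'i%C * s%:C) * (s%:C * r + c%:C * j).
  rewrite !(rmorphM, rmorphN) /=; have -> : (2 : R)%:C = 2 by rewrite rmorphMn.
  by ring.
have := ler_cabsD ((c%:C - 'i%C * s%:C) * (s%:C * r + (- c)%:C * j))
                  ((c%:C + 'i%C * s%:C) * (s%:C * r + c%:C * j)).
by rewrite -decomp !cabsM cs_m cs_p !mul1r cabs_real ger0_norm // !mulr_ge0.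
Qed.

Lemma cdot_cartesianE M x y :
  cdot (M *m x) y = cdot (realpart M *m x) y + 'i%C * cdot (imagpart M *m x) y.
Proof. by rewrite {1}[M]cartesianE mulmxDl -scalemxAl cdotDl cdotZl. Qed.

Lemma herm_sector_cauchy_schwarz (c s : R) Hr Hi x y :
  0 < c -> 0 < s -> s ^+ 2 + c ^+ 2 = 1 -> adjmx Hr = Hr -> adjmx Hi = Hi ->
  (forall u, c * `|Re (quadform Hi u)| <= s * Re (quadform Hr u)) ->
  c ^+ 2 * cabs (cdot (Hr *m x) y + 'i%C * cdot (Hi *m x) y) ^+ 2 <=
  Re (quadform Hr x) * Re (quadform Hr y).
Proof.
move=> c_gt0 s_gt0 sc hr hi sect.
have hP a : adjmx (s%:C *: Hr + a%:C *: Hi) = s%:C *: Hr + a%:C *: Hi.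
  exact: herm_realcomb.
have psdP a : `|a| <= c -> forall u, 0 <= Re (quadform (s%:C *: Hr + a%:C *: Hi) u).
  move=> le_ac u; rewrite Re_quadform_realcomb -lerBlDr sub0r; apply: le_trans (sect u).
  apply: le_trans (_ : `|a * Re (quadform Hi u)| <= _); first by rewrite -normrN ler_norm.
  by rewrite normrM ler_wpM2r.
have le_m : `|- c| <= c by rewrite normrN gtr0_norm.
have le_p : `|c| <= c by rewrite gtr0_norm.
have sumP u : Re (quadform (s%:C *: Hr + (- c)%:C *: Hi) u) +
    Re (quadform (s%:C *: Hr + c%:C *: Hi) u) = 2 * s * Re (quadform Hr u).
  transitivity ((s * Re (quadform Hr u) + - c * Re (quadform Hi u)) +
                (s * Re (quadform Hr u) + c * Re (quadform Hi u))); last by ring.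
  by congr (_ + _); apply: Re_quadform_realcomb.
have CSm := psd_cauchy_schwarz x y (hP _) (psdP _ le_m).
have CSp := psd_cauchy_schwarz x y (hP _) (psdP _ le_p).
rewrite (cdot_realcomb s (- c) Hr Hi x y) in CSm.
rewrite (cdot_realcomb s c Hr Hi x y) in CSp.
have tri := cabs_sector_decomp (cdot (Hr *m x) y) (cdot (Hi *m x) y)
  (ltW s_gt0) (ltW c_gt0) sc.
rewrite -exprMn; apply: (scaled_sum_cauchy_schwarz _ _ (cabs_ge0 _) (cabs_ge0 _)
  (psdP _ le_m x) (psdP _ le_m y) (psdP _ le_p x) (psdP _ le_p y) CSm CSp _
  (sumP x) (sumP y)).
- by rewrite mulr_gt0.
- by rewrite mulr_ge0 ?cabs_ge0 // ltW.
- by rewrite mulrA.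
Qed.

Lemma sector_cauchy_schwarz (c s : R) M : 0 < c -> 0 <= s -> s ^+ 2 + c ^+ 2 = 1 ->
  (forall u, closed_sector c s (quadform M u)) ->
  forall x y, c ^+ 2 * cabs (cdot (M *m x) y) ^+ 2 <=
              Re (quadform M x) * Re (quadform M y).
Proof.
move=> c_gt0 s_ge0 sc sectM x y.
have ReR u : Re (quadform (realpart M) u) = Re (quadform M u).
  by rewrite quadform_realpart.
have ReI u : Re (quadform (imagpart M) u) = Im (quadform M u).
  by rewrite quadform_imagpart.
rewrite cdot_cartesianE -!ReR; move: (realpart_herm M) (imagpart_herm M) ReR ReI.
move: (realpart M) (imagpart M) => Hr Hi hr hi ReR ReI.
have [s_gt0|s_le0] := ltrP 0 s.
  apply: (@herm_sector_cauchy_schwarz c s) => // u; rewrite ReR ReI.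
  by case: (sectM u).
have s0 : s = 0 by apply/le_anti; rewrite s_le0 s_ge0.
have psdR u : 0 <= Re (quadform Hr u) by rewrite ReR; case: (sectM u).
have Im0 u : Re (quadform Hi u) = 0.
  by have [_] := sectM u; rewrite ReI s0 mul0r pmulr_rle0 // normr_le0 => /eqP.
have c1 : c ^+ 2 = 1 by rewrite -sc s0 expr0n add0r.
rewrite (herm_quadform0_cdot x y hi Im0) mulr0 addr0 c1 mul1r.
exact: psd_cauchy_schwarz.
Qed.

End SectorCauchySchwarz.

Section Bounds.
Variables (R : realType) (n : nat).
Implicit Types (v w x y : 'cV[R[i]]_n) (M : 'M[R[i]]_n).

Definition mx_abs_sum M : R := \sum_i \sum_j cabs (M i j).

Lemma mx_abs_sum_ge0 M : 0 <= mx_abs_sum M.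
Proof. by apply: sumr_ge0 => i _; apply: sumr_ge0 => j _; apply: cabs_ge0. Qed.

Lemma sqr_vnorm_sum v : vnorm v ^+ 2 = \sum_i cabs (v i 0) ^+ 2.
Proof.
apply: (@complexI R); rewrite sqr_vnormC rmorph_sum /cdot.
by apply: eq_bigr => i _; exact/esym/sqr_cabsC.
Qed.

Lemma cabs_coord_le v j : cabs (v j 0) <= vnorm v.
Proof.
rewrite -(@ler_pXn2r _ 2) ?nnegrE ?cabs_ge0 ?vnorm_ge0 // sqr_vnorm_sum.
by rewrite (bigD1 j) //= lerDl sumr_ge0 // => i _; rewrite sqr_ge0.
Qed.

Lemma cabs_cdot_mulmx_le M v w :
  cabs (cdot (M *m v) w) <= mx_abs_sum M * vnorm v * vnorm w.
Proof.
rewrite /cdot /mx_abs_sum !mulr_suml; apply: le_trans (ler_cabs_sum _ _) _.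
apply: ler_sum => i _; rewrite cabsM mxE; apply: ler_pM; rewrite ?cabs_ge0 //.
  apply: le_trans (ler_cabs_sum _ _) _; rewrite mulr_suml; apply: ler_sum => j _.
  by rewrite cabsM ler_wpM2l ?cabs_ge0 ?cabs_coord_le.
by rewrite cabs_conjc cabs_coord_le.
Qed.

Lemma vnorm_mulmx_le M v : vnorm (M *m v) <= mx_abs_sum M * vnorm v.
Proof.
have [->|Mv0] := eqVneq (M *m v) 0.
  by rewrite vnorm0 mulr_ge0 ?vnorm_ge0 ?mx_abs_sum_ge0.
rewrite -(ler_pM2r (vnorm_gt0 Mv0)) -expr2 sqr_vnorm.
by apply: le_trans (Re_le_cabs _) (cabs_cdot_mulmx_le _ _ _).
Qed.

End Bounds.

Section Suprema.
Variable R : realType.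
Implicit Types (E : set R) (b : R).
Local Open Scope classical_set_scope.

Lemma sup_le_ub E b :
  0 <= b -> (forall r, E r -> r <= b) -> sup E <= b.
Proof.
move=> b0 Eb; have [E0|] := pselect (E !=set0); first exact: ge_sup.
by move=> E0; rewrite sup_out // => -[].
Qed.

Lemma sup_ge0 E :
  has_ubound E -> (forall r, E r -> 0 <= r) -> 0 <= sup E.
Proof.
move=> ubE E0; have [[r Er]|] := pselect (E !=set0).
  exact: le_trans (E0 r Er) (ub_le_sup ubE Er).
by move=> noE; rewrite sup_out // => -[].
Qed.

End Suprema.

Section NormAndRadius.
Variables (R : realType) (n : nat).
Implicit Types (x y u : 'cV[R[i]]_n) (A : 'M[R[i]]_n) (q : R[i]).
Local Open Scope classical_set_scope.

Lemma opnorm_ubound A :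
  has_ubound [set vnorm (A *m x) | x in [set x : 'cV[R[i]]_n | vnorm x = 1]].
Proof.
by exists (mx_abs_sum A) => _ [x /= x1 <-]; rewrite -[leRHS]mulr1 -x1 vnorm_mulmx_le.
Qed.

Lemma vnorm_mulmx_le_opnorm A x : vnorm x = 1 -> vnorm (A *m x) <= opnorm A.
Proof. by move=> x1; apply: (ub_le_sup (opnorm_ubound A)); exists x. Qed.

Lemma opnorm_ge0 A : 0 <= opnorm A.
Proof. by apply: sup_ge0 (opnorm_ubound A) _ => _ [x _ <-]; apply: vnorm_ge0. Qed.

Lemma opnorm_le_cdot A (b : R) : 0 <= b ->
  (forall x y, vnorm x = 1 -> vnorm y = 1 -> cabs (cdot (A *m x) y) <= b) ->
  opnorm A <= b.
Proof.
move=> b0 Ab; apply: sup_le_ub => // _ [x /= x1 <-].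
have [->|Ax0] := eqVneq (A *m x) 0; first by rewrite vnorm0.
have [y1 Axy] := cdot_normalize Ax0.
apply: le_trans (Ab x _ x1 (proj2 (vnorm_eq1 _) y1)).
by rewrite Axy cabs_real ger0_norm ?vnorm_ge0.
Qed.

Lemma qnumradius_ubound q A : has_ubound [set cabs z | z in qnumrange q A].
Proof.
exists (opnorm A) => _ [z [x [y [x1 y1 _ ->]]] <-].
by apply: le_trans (cauchy_schwarz _ _) _; rewrite y1 mulr1 vnorm_mulmx_le_opnorm.
Qed.

Lemma qnumradius_ge q A z : qnumrange q A z -> cabs z <= qnumradius q A.
Proof. by move=> Wz; apply: (ub_le_sup (qnumradius_ubound q A)); exists z. Qed.

Lemma qnumradius_le_opnorm q A : qnumradius q A <= opnorm A.
Proof.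
apply: sup_le_ub (opnorm_ge0 A) _ => _ [z [x [y [x1 y1 _ ->]]] <-].
by apply: le_trans (cauchy_schwarz _ _) _; rewrite y1 mulr1 vnorm_mulmx_le_opnorm.
Qed.

End NormAndRadius.

Section LowerBounds.
Variables (R : realType) (n : nat).
Implicit Types (x y u z : 'cV[R[i]]_n) (A : 'M[R[i]]_n) (q : R[i]).

Lemma exists_orthogonal_unit u : (1 < n)%N ->
  exists z, cdot u z = 0 /\ vnorm z = 1.
Proof.
move=> n_gt1; have n_gt0 : (0 < n)%N by apply: ltn_trans n_gt1.
pose i0 : 'I_n := Ordinal n_gt0; pose i1 : 'I_n := Ordinal n_gt1.
have i10 : i1 != i0 by [].
pose z0 : 'cV[R[i]]_n :=
  \col_i (if i == i0 then - (u i1 0)^*%C else if i == i1 then (u i0 0)^*%C else 0).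
have uz0 : cdot u z0 = 0.
  rewrite cdotC /cdot (bigD1 i0) //= (bigD1 i1) //= big1 => [|i /andP[ne0 ne1]].
    by rewrite /z0 !mxE eqxx (negPf i10) eqxx addr0 mulNr mulrC addNr conjc0.
  by rewrite /z0 mxE (negPf ne0) (negPf ne1) mul0r.
have [z00|z0_neq0] := eqVneq z0 0.
  have u0 : u i0 0 = 0.
    move/matrixP: z00 => /(_ i1 0); rewrite /z0 !mxE (negPf i10) eqxx.
    by move/eqP; rewrite conjc_eq0 => /eqP.
  pose e0 : 'cV[R[i]]_n := \col_i (if i == i0 then 1 else 0).
  have cdot_e0 v : cdot v e0 = v i0 0.
    rewrite /cdot (bigD1 i0) //= big1 => [|i /negPf i_neq0].
      by rewrite /e0 mxE eqxx rmorph1 mulr1 addr0.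
    by rewrite /e0 mxE i_neq0 rmorph0 mulr0.
  exists e0; rewrite cdot_e0 u0; split => //.
  by apply/vnorm_eq1; rewrite cdot_e0 /e0 mxE eqxx.
have [z1 _] := cdot_normalize z0_neq0.
exists ((vnorm z0)^-1%:C *: z0); split; last exact/vnorm_eq1.
by rewrite cdotZr uz0 mulr0.
Qed.

Lemma qnumradius_ge0 q A : 0 <= qnumradius q A.
Proof. by apply: sup_ge0 (qnumradius_ubound q A) _ => _ [z _ <-]; apply: cabs_ge0. Qed.

Lemma qnumrange_witness q A u z (s t : R) : vnorm u = 1 -> cdot u z = 0 ->
  (s ^+ 2)%:C * cdot z z = (s ^+ 2)%:C -> s ^+ 2 = 1 - cabs q ^+ 2 -> t ^+ 2 = 1 ->
  qnumrange q A (q * quadform A u + (t * s)%:C * cdot (A *m u) z).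
Proof.
move=> /vnorm_eq1 uu uz zz s2 t2.
exists u, (q^*%C *: u + (t * s)%:C *: z); split.
- exact/vnorm_eq1.
- apply/vnorm_eq1; rewrite cdotDl !cdotDr !cdotZl !cdotZr conjcK conjc_real.
  rewrite uu uz [cdot z u]cdotC uz conjc0 !mulr0 addr0 add0r mulr1 mulrA -rmorphM.
  rewrite -expr2 exprMn t2 mul1r zz mulrC -sqr_cabsC s2.
  have -> : 1 = (cabs q ^+ 2 + (1 - cabs q ^+ 2))%:C :> R[i] by rewrite addrC subrK.
  exact/esym/(rmorphD (real_complex R)).
- by rewrite cdotDr !cdotZr conjcK conjc_real uu uz mulr0 mulr1 addr0.
- by rewrite cdotDr !cdotZr conjcK conjc_real.
Qed.

Lemma qnumradius_ge_quadform q A u : (1 < n)%N \/ cabs q = 1 -> cabs q <= 1 ->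
  vnorm u = 1 -> cabs q * cabs (quadform A u) <= qnumradius q A.
Proof.
move=> hn q_le1 u1; pose s := Num.sqrt (1 - cabs q ^+ 2).
have s2 : s ^+ 2 = 1 - cabs q ^+ 2.
  by rewrite sqr_sqrtr // subr_ge0 -(expr1n _ 2) ler_pXn2r ?nnegrE ?cabs_ge0.
(* z is a unit vector orthogonal to u, or anything when s = 0. *)
have [z [uz zz]] : exists z, cdot u z = 0 /\ (s ^+ 2)%:C * cdot z z = (s ^+ 2)%:C.
  case: hn => [/(exists_orthogonal_unit u)[z [uz /vnorm_eq1 z1]]|q1].
    by exists z; rewrite z1 mulr1.
  by exists 0; rewrite cdot0r s2 q1 expr1n subrr mul0r.
have W_le t : t ^+ 2 = 1 ->
    cabs (q * quadform A u + (t * s)%:C * cdot (A *m u) z) <= qnumradius q A.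
  by move=> t2; apply/qnumradius_ge/(qnumrange_witness _ u1).
have := ler_cabsD (q * quadform A u + (1 * s)%:C * cdot (A *m u) z)
                  (q * quadform A u + (-1 * s)%:C * cdot (A *m u) z).
have -> : q * quadform A u + (1 * s)%:C * cdot (A *m u) z +
    (q * quadform A u + (-1 * s)%:C * cdot (A *m u) z) = 2%:R%:C * (q * quadform A u).
  by rewrite mul1r mulN1r rmorphN /= rmorph_nat; ring.
have := lerD (W_le 1 (expr1n _ 2)) (W_le (-1) (etrans (sqrrN 1) (expr1n _ 2))).
by rewrite !cabsM cabs_real ger0_norm //; lra.
Qed.

Lemma sector_cdot_le q A (om : R[i]) (c s : R) x y :
  (1 < n)%N \/ cabs q = 1 -> cabs q <= 1 -> cabs om = 1 ->
  0 < c -> 0 <= s -> s ^+ 2 + c ^+ 2 = 1 ->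
  (forall u, closed_sector c s (om * quadform A u)) ->
  vnorm x = 1 -> vnorm y = 1 ->
  cabs q * c * cabs (cdot (A *m x) y) <= qnumradius q A.
Proof.
move=> hn q_le1 om1 c_gt0 s_ge0 sc sectA x1 y1.
have omA u v : cdot ((om *: A) *m u) v = om * cdot (A *m u) v.
  by rewrite -scalemxAl cdotZl.
have sect u : closed_sector c s (quadform (om *: A) u) by rewrite omA.
have := sector_cauchy_schwarz c_gt0 s_ge0 sc sect x y.
rewrite !omA cabsM om1 mul1r => cs.
have wq u : vnorm u = 1 -> cabs q * Re (om * quadform A u) <= qnumradius q A.
  move=> u1; apply: le_trans (qnumradius_ge_quadform A hn q_le1 u1).
  by rewrite ler_wpM2l ?cabs_ge0 // (le_trans (Re_le_cabs _)) // cabsM om1 mul1r.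
have lhs_ge0 : 0 <= cabs q * c * cabs (cdot (A *m x) y).
  by rewrite !mulr_ge0 ?cabs_ge0 // ltW.
rewrite -(@ler_pXn2r _ 2) ?nnegrE ?qnumradius_ge0 //.
have -> : (cabs q * c * cabs (cdot (A *m x) y)) ^+ 2 =
    cabs q ^+ 2 * (c ^+ 2 * cabs (cdot (A *m x) y) ^+ 2) by ring.
apply: le_trans (ler_wpM2l (sqr_ge0 _) cs) _.
have [Rex_ge0 _] := sectA x; have [Rey_ge0 _] := sectA y.
have -> : cabs q ^+ 2 * (Re (om * quadform A x) * Re (om * quadform A y)) =
    (cabs q * Re (om * quadform A x)) * (cabs q * Re (om * quadform A y)) by ring.
by rewrite expr2 ler_pM ?mulr_ge0 ?cabs_ge0 ?wq.
Qed.

Lemma sector_qnumradius_ge q A (om : R[i]) (c s : R) :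
  (1 < n)%N \/ cabs q = 1 -> 0 < cabs q <= 1 -> cabs om = 1 ->
  0 < c -> 0 <= s -> s ^+ 2 + c ^+ 2 = 1 ->
  (forall u, closed_sector c s (om * quadform A u)) ->
  cabs q * c * opnorm A <= qnumradius q A.
Proof.
move=> hn /andP[q_gt0 q_le1] om1 c_gt0 s_ge0 sc sectA.
have qc_gt0 : 0 < cabs q * c by rewrite mulr_gt0.
rewrite mulrC -ler_pdivlMr //; apply: opnorm_le_cdot => [|x y x1 y1].
  by rewrite divr_ge0 ?qnumradius_ge0 // ltW.
rewrite ler_pdivlMr // mulrC.
exact: (sector_cdot_le hn q_le1 om1 c_gt0 s_ge0 sc sectA x1 y1).
Qed.

End LowerBounds.

Section Sectorial.
Variables (R : realType) (n : nat).
Implicit Types (x u v : 'cV[R[i]]_n) (A : 'M[R[i]]_n).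

Lemma quadform_scale A u (k : R) :
  quadform A (k%:C *: u) = (k ^+ 2)%:C * quadform A u.
Proof. by rewrite -scalemxAr cdotZl cdotZr conjc_real mulrA -rmorphM -expr2. Qed.

Lemma sectorialP (alpha : R) A : sectorial alpha A -> forall u,
  [/\ u != 0 -> 0 < Re (quadform A u), 0 <= Re (quadform A u) &
      `|Im (quadform A u)| <= tan alpha * Re (quadform A u)].
Proof.
move=> sectA u; have [->|u0] := eqVneq u 0.
  by rewrite mulmx0 cdot0l /= normr0 mulr0 lexx; split.
have [u1 _] := cdot_normalize u0; set k := (vnorm u)^-1.
have k2_gt0 : 0 < k ^+ 2 by rewrite exprn_gt0 // invr_gt0 vnorm_gt0.
have [] := sectA _ (ex_intro _ _ (conj (proj2 (vnorm_eq1 _) u1) erefl)).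
rewrite quadform_scale Re_realM Im_realM normrM (ger0_norm (ltW k2_gt0)).
rewrite pmulr_rgt0 // mulrCA ler_pM2l // => Re_gt0 Im_le.
by split; [move=> _ | apply: ltW |].
Qed.

Lemma cos_gt0_sin_ge0 (alpha : R) :
  0 <= alpha < pi / 2 -> 0 < cos alpha /\ 0 <= sin alpha.
Proof.
move=> /andP[alpha_ge0 alpha_lt]; split.
  apply: cos_gt0_pihalf; rewrite alpha_lt andbT; apply: lt_le_trans alpha_ge0.
  by rewrite oppr_lt0 divr_gt0 // pi_gt0.
apply: sin_ge0_pi; rewrite alpha_ge0 /=; apply: le_trans (ltW alpha_lt) _.
by rewrite ler_pdivrMr // ler_peMr // ?ler1n // ltW // pi_gt0.
Qed.

Lemma sectorial_closed_sector (alpha : R) A : 0 <= alpha < pi / 2 ->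
  sectorial alpha A -> forall u, closed_sector (cos alpha) (sin alpha) (quadform A u).
Proof.
move=> /cos_gt0_sin_ge0[cos_gt0 _] sectA u; have [_ Re_ge0 Im_le] := sectorialP sectA u.
split => //; apply: le_trans (ler_wpM2l (ltW cos_gt0) Im_le) _.
suff -> : cos alpha * (tan alpha * Re (quadform A u)) = sin alpha * Re (quadform A u).
  by [].
by rewrite /tan; field; rewrite gt_eqF.
Qed.

Lemma closed_sector_scale (k c s : R) (z : R[i]) : 0 <= k ->
  closed_sector c s z -> closed_sector (k * c) (k * s) z.
Proof. by move=> k0 [Re_ge0 le_cs]; split; rewrite // -!mulrA ler_wpM2l. Qed.

Lemma accretive_dissipative_closed_sector A : accretive_dissipative A ->
  let c := (Num.sqrt 2)^-1 in
  forall u, closed_sector c c (Complex c (- c) * quadform A u).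
Proof.
move=> [[_ posR] [_ posI]] c u; have c_gt0 : 0 < c by rewrite invr_gt0 sqrtr_gt0 ltr0n.
have [Re_ge0 Im_ge0] : 0 <= Re (quadform A u) /\ 0 <= Im (quadform A u).
  have [->|u0] := eqVneq u 0; first by rewrite mulmx0 cdot0l.
  have := posR u u0; rewrite quadform_realpart ltcR => /ltW ->.
  by have := posI u u0; rewrite quadform_imagpart ltcR => /ltW ->.
case: (quadform A u) Re_ge0 Im_ge0 => a b /= a0 b0; simpc; split => /=.
  by rewrite -mulrDr mulr_ge0 ?addr_ge0 // ltW.
rewrite -mulrBr -mulrDr normrM (ger0_norm (ltW c_gt0)).
by rewrite !ler_pM2l // ler_norml; apply/andP; split; lra.
Qed.

End Sectorial.

Lemma bernoulli_le_expr (R : realFieldType) (r : R) (k : nat) :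
  1 <= r -> 1 + k%:R * (r - 1) <= r ^+ k.
Proof.
move=> r_ge1; elim: k => [|k IH]; first by rewrite mul0r addr0 expr0.
rewrite exprS; apply: le_trans (ler_wpM2l (le_trans ler01 r_ge1) IH).
have k_ge0 : 0 <= (k%:R : R) by rewrite ler0n.
by rewrite -natr1; have := mulr_ge0 k_ge0 (sqr_ge0 (r - 1)); nra.
Qed.

Lemma bounded_log_convex_le (R : archiFieldType) (a : nat -> R) (C : R) :
  (forall k, 0 <= a k) -> 0 < a 0%N -> (forall k, a k.+1 ^+ 2 <= a k * a k.+2) ->
  (forall k, a k <= C) -> a 1%N <= a 0%N.
Proof.
move=> a_ge0 a0_gt0 log_convex a_le.
pose r := a 1%N / a 0%N.
have r_ge0 : 0 <= r by rewrite divr_ge0 // ltW.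
have ratio k : r * a k <= a k.+1.
  elim: k => [|k IH]; first by rewrite /r mulfVK ?gt_eqF.
  have [->|ak1_neq0] := eqVneq (a k.+1) 0; first by rewrite mulr0.
  have ak1_gt0 : 0 < a k.+1 by rewrite lt_def ak1_neq0 a_ge0.
  have ak_gt0 : 0 < a k.
    rewrite lt_def a_ge0 andbT; apply: contraTneq (log_convex k) => ->.
    by rewrite mul0r -ltNge exprn_gt0.
  rewrite -(ler_pM2l ak_gt0); apply: le_trans (log_convex k).
  by rewrite expr2 mulrCA mulrA ler_pM2r //; nra.
have geom k : r ^+ k * a 0%N <= a k.
  elim: k => [|k IH]; first by rewrite expr0 mul1r.
  by apply: le_trans (ratio k); rewrite exprS -mulrA ler_wpM2l.
have r_le1 : r <= 1.
  rewrite leNgt; apply/negP => r_gt1.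
  have ra_gt0 : 0 < (r - 1) * a 0%N by rewrite mulr_gt0 // subr_gt0.
  have C_ge0 : 0 <= C := le_trans (a_ge0 0%N) (a_le 0%N).
  have /archi_boundP := divr_ge0 C_ge0 (ltW ra_gt0); rewrite ltr_pdivrMr //.
  move: (Num.Def.archi_bound _) => k k_gt.
  have : a 0%N * (1 + k%:R * (r - 1)) <= C.
    apply: le_trans (a_le k); apply: le_trans (geom k); rewrite mulrC.
    by rewrite ler_wpM2r ?bernoulli_le_expr // ltW.
  nra.
have -> : a 1%N = r * a 0%N by rewrite /r mulfVK // gt_eqF.
by rewrite -[leRHS]mul1r ler_wpM2r // ltW.
Qed.

Section SquareRootDomination.
Variables (R : realType) (n : nat).
Implicit Types (x v w : 'cV[R[i]]_n) (H A : 'M[R[i]]_n).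

Lemma posdef_unitmx H : (forall v, v != 0 -> 0 < Re (quadform H v)) -> H \in unitmx.
Proof.
move=> posH; rewrite unitmxE unitfE -det_tr; apply/negP => /det0P [w w_neq0 wH0].
have Hw0 : H *m w^T = 0 by rewrite -[H *m _]trmxK trmx_mul trmxK wH0 trmx0.
have wT_neq0 : w^T != 0 by apply: contra w_neq0 => /eqP wT0; rewrite -[w]trmxK wT0 trmx0.
by have := posH _ wT_neq0; rewrite Hw0 cdot0l ltxx.
Qed.

Lemma abs_quadform_le_of_norm_le Hr Hi x : adjmx Hr = Hr -> adjmx Hi = Hi ->
  (forall v, v != 0 -> 0 < Re (quadform Hr v)) ->
  (forall v, vnorm (Hi *m v) <= vnorm (Hr *m v)) ->
  `|Re (quadform Hi x)| <= Re (quadform Hr x).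
Proof.
move=> hr hi posHr HiHr.
have psdHr v : 0 <= Re (quadform Hr v).
  by have [->|/posHr/ltW//] := eqVneq v 0; rewrite mulmx0 cdot0l.
have HrL : Hr *m (invmx Hr *m Hi) = Hi by rewrite mulKVmx ?posdef_unitmx.
pose w k := iter k (mulmx (invmx Hr *m Hi)) x.
have HrwS k : Hr *m w k.+1 = Hi *m w k by rewrite /= mulmxA HrL.
pose a k := Re (quadform Hr (w k)).
have log_convex k : a k.+1 ^+ 2 <= a k * a k.+2.
  have shift : quadform Hr (w k.+1) = cdot (Hr *m w k) (w k.+2).
    by rewrite HrwS cdot_adjmx hi -HrwS [RHS]cdot_adjmx hr.
  have := psd_cauchy_schwarz (w k) (w k.+2) hr psdHr.
  by rewrite -shift (herm_quadform_real _ hr) cabs_real real_normK ?num_real.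
have Hrw_le k : vnorm (Hr *m w k) <= vnorm (Hr *m x).
  by elim: k => [//|k IH]; rewrite HrwS (le_trans (HiHr _)).
have w_le v : vnorm v <= mx_abs_sum (invmx Hr) * vnorm (Hr *m v).
  by have := vnorm_mulmx_le (invmx Hr) (Hr *m v); rewrite mulKmx ?posdef_unitmx.
have a_le k : a k <= vnorm (Hr *m x) * (mx_abs_sum (invmx Hr) * vnorm (Hr *m x)).
  apply: le_trans (Re_le_cabs _) _; apply: le_trans (cauchy_schwarz _ _) _.
  apply: ler_pM; rewrite ?vnorm_ge0 //; apply: le_trans (w_le _) _.
  by apply: ler_wpM2l; [exact: mx_abs_sum_ge0 | exact: Hrw_le].
have [->|x_neq0] := eqVneq x 0; first by rewrite mulmx0 cdot0l normr0.
have a10 := bounded_log_convex_le (fun k => psdHr (w k)) (posHr x x_neq0)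
  log_convex a_le.
have := psd_cauchy_schwarz (w 1%N) (w 0%N) hr psdHr.
rewrite {1}HrwS (herm_quadform_real _ hi) cabs_real real_normK ?num_real // => cs.
rewrite -(@ler_pXn2r _ 2) ?nnegrE ?normr_ge0 ?psdHr // real_normK ?num_real //.
by apply: le_trans cs _; rewrite expr2; apply: ler_wpM2r; [exact: psdHr | exact: a10].
Qed.

Lemma norm_imagpart_le_realpart A : (forall v, 0 <= Re (quadform (A *m A) v)) ->
  forall v, vnorm (imagpart A *m v) <= vnorm (realpart A *m v).
Proof.
move=> psdA2 v; apply: vnorm_le; have := psdA2 v.
rewrite -mulmxA cdot_adjmx adjmx_cartesianE {1}[A]cartesianE.
move: (realpart A) (imagpart A) => Hr Hi; rewrite mulmxDl mulmxBl -!scalemxAl.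
move: (Hr *m v) (Hi *m v) => r j.
rewrite cdotDl !cdotBr !cdotZl !cdotZr [cdot j r]cdotC.
have -> : ('i%C)^*%C = - 'i%C :> R[i] by apply/eqP; simpc.
set P := cdot r r; set Q := cdot j j; set X := cdot r j.
have -> : P - - 'i%C * X + ('i%C * X^*%C - 'i%C * (- 'i%C * Q)) =
    P + 'i%C ^+ 2 * Q + 'i%C * (X + X^*%C) by ring.
rewrite sqr_i mulN1r addcJ ReD ReB; have -> : Re ('i%C * (2%:R * (Re X)%:C)) = 0 by simpc.
by rewrite addr0 subr_ge0.
Qed.

Lemma sectorial_sqr_closed_sector (alpha : R) A :
  sectorial alpha A -> sectorial alpha (A *m A) ->
  forall x, closed_sector 1 1 (quadform A x).
Proof.
move=> sectA sectA2 x; have [_ Re_ge0 _] := sectorialP sectA x.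
have ReR : Re (quadform (realpart A) x) = Re (quadform A x) by rewrite quadform_realpart.
have ReI : Re (quadform (imagpart A) x) = Im (quadform A x) by rewrite quadform_imagpart.
split => //; rewrite !mul1r -ReR -ReI.
apply: abs_quadform_le_of_norm_le.
- exact: realpart_herm.
- exact: imagpart_herm.
- by move=> v v0; rewrite quadform_realpart /=; have [->] := sectorialP sectA v.
- by apply: norm_imagpart_le_realpart => v; have [] := sectorialP sectA2 v.
Qed.

End SquareRootDomination.

Theorem theorem2p10 (R : realType) (n : nat) (q : R[i]) (A : 'M[R[i]]_n) :
  0 < cabs q <= 1 ->
  (1 < n)%N \/ cabs q = 1 ->
  ((forall alpha : R, 0 <= alpha < pi / 2 -> sectorial alpha A ->
      cabs q * cos alpha * opnorm A <= qnumradius q A <= opnorm A)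
   /\
   ((exists alpha : R, 0 <= alpha < pi / 2 /\
        sectorial alpha A /\ sectorial alpha (A *m A))
      \/ accretive_dissipative A ->
      cabs q / Num.sqrt 2 * opnorm A <= qnumradius q A <= opnorm A)).
Proof.
move=> hq hn; have cabs1 : cabs (1 : R[i]) = 1 by rewrite cabs_real normr1.
pose c : R := (Num.sqrt 2)^-1.
have c_gt0 : 0 < c by rewrite invr_gt0 sqrtr_gt0 ltr0n.
have cc1 : c ^+ 2 + c ^+ 2 = 1 by rewrite exprVn sqr_sqrtr ?ler0n //; field.
split=> [alpha alpha_range sectA|hb]; rewrite qnumradius_le_opnorm andbT.
  have [cos_gt0 sin_ge0] := cos_gt0_sin_ge0 alpha_range.
  apply: (sector_qnumradius_ge hn hq cabs1 cos_gt0 sin_ge0) => [|u].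
    by rewrite addrC cos2Dsin2.
  by rewrite mul1r; exact: sectorial_closed_sector.
case: hb => [[alpha [_ [sectA sectA2]]]|adA].
  apply: (sector_qnumradius_ge hn hq cabs1 c_gt0 (ltW c_gt0) cc1) => u.
  rewrite mul1r -[c]mulr1; apply: closed_sector_scale (ltW c_gt0) _.
  exact: sectorial_sqr_closed_sector sectA2 u.
have cabs_om : cabs (Complex c (- c)) = 1 by rewrite /cabs /= sqrrN cc1 sqrtr1.
exact: (sector_qnumradius_ge hn hq cabs_om c_gt0 (ltW c_gt0) cc1
  (accretive_dissipative_closed_sector adA)).
Qed.
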